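(* Let $C$ be a normal, closed cone with nonempty interior in a real Banach space. If $f:\operatorname{int} C\to\operatorname{int} C$ is $\tau$-condensing and $g:\operatorname{int} C\to\operatorname{int} C$ is $d_T$-nonexpansive, then $f+g$ is $\tau$-condensing.
   Context: A closed cone $C$ (closed convex, $\lambda C\subseteq C$ for $\lambda\ge0$, $C\cap(-C)=\{0\}$) induces the order $x\le y$ iff $y-x\in C$. $C$ is normal if there is $\kappa$ with $\|x\|\le\kappa\|y\|$ whenever $0\le x\le y$. Thompson's metric on $\operatorname{int}C$: $d_T(x,y)=\log\inf\{\beta\ge1:\beta^{-1}x\le y\le\beta x\}$; $g$ is $d_T$-nonexpansive if $d_T(g(x),g(y))\le d_T(x,y)$. For a $d_T$-bounded set $A\subseteq\operatorname{int}C$, $\tau(A)=\inf\{d>0: A$ has a finite cover by sets of $d_T$-diameter $\le d\}$. A continuous map $f:D\to\operatorname{int}C$ ($D\subseteq\operatorname{int}C$) is $\tau$-condensing if $\tau(f(A))<\tau(A)$ for every $d_T$-bounded $A\subseteq D$ with $\tau(A)>0$. *)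

From HB Require Import structures.
From mathcomp Require Import all_boot all_order all_algebra.
From mathcomp Require Import all_classical all_reals all_analysis.
Set Implicit Arguments. Unset Strict Implicit. Unset Printing Implicit Defensive.
Import Order.TTheory GRing.Theory Num.Theory.
Import numFieldNormedType.Exports.
Local Open Scope classical_set_scope.
Local Open Scope ring_scope.

Section Cone.
Context {R : realType} {V : completeNormedModType R}.

Definition is_closed_cone (C : set V) : Prop :=
  [/\ closed C,
      (forall x y (t : R), C x -> C y -> 0 <= t -> t <= 1 ->
         C (t *: x + (1 - t) *: y)),
      (forall (l : R) x, 0 <= l -> C x -> C (l *: x)) &
      (forall x, C x -> C (- x) -> x = 0)].

Definition cle (C : set V) (x y : V) : Prop := C (y - x).

Definition normal_cone (C : set V) : Prop :=
  exists kappa : R, forall x y : V,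
    cle C 0 x -> cle C x y -> `|x| <= kappa * `|y|.

Definition dT (C : set V) (x y : V) : R :=
  ln (inf [set b : R | 1 <= b /\ cle C (b^-1 *: x) y /\ cle C y (b *: x)]).

Definition dT_bounded (C : set V) (A : set V) : Prop :=
  A `<=` interior C /\ exists M : R, forall x y, A x -> A y -> dT C x y <= M.

Definition finite_cover_diam (C : set V) (A : set V) (d : R) : Prop :=
  exists s : seq (set V),
    A `<=` (fun x => exists2 S, S \in s & S x) /\
    (forall S, S \in s ->
       S `<=` interior C /\ forall x y, S x -> S y -> dT C x y <= d).

(* Kuratowski-type measure of noncompactness w.r.t. d_T (extended real;
   it is finite on d_T-bounded sets, +oo if no such cover exists) *)
Definition tau (C : set V) (A : set V) : \bar R :=
  ereal_inf [set (d%:E) | d in [set d : R | 0 < d /\ finite_cover_diam C A d]].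

Definition tau_condensing (C : set V) (D : set V) (f : V -> V) : Prop :=
  [/\ (forall x, D x -> interior C (f x)),
      {within D, continuous f} &
      (forall A, A `<=` D -> dT_bounded C A -> (0 < tau C A)%E ->
         (tau C (f @` A) < tau C A)%E)].

Definition dT_nonexpansive (C : set V) (g : V -> V) : Prop :=
  (forall x, interior C x -> interior C (g x)) /\
  forall x y, interior C x -> interior C y -> dT C (g x) (g y) <= dT C x y.

End Cone.

From HB Require Import structures.
From mathcomp Require Import all_boot all_order all_algebra.
From mathcomp Require Import all_classical all_reals all_analysis.
From mathcomp Require Import ring lra.
Import Order.TTheory GRing.Theory Num.Theory.
Import numFieldNormedType.Exports.
Local Open Scope classical_set_scope.
Local Open Scope ring_scope.

Set Implicit Arguments.
Unset Strict Implicit.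
Unset Printing Implicit Defensive.

(* If [v <= K u], then [u + v] and [u' + v'] are within the factor
   [(a + K b) / (1 + K)] of each other whenever [u, u'] are within [a] and
   [v, v'] within [b], [a <= b] (lemma [tboundD]): the deviation of the
   v-parts is damped by the u-parts.  On a d_T-bounded set [A], the finite
   covers of [f(A)] and the bound on [g(A)] make [f] and [g] uniformly
   comparable, [g <= K f].  Covering [f(A)] with pieces of diameter
   [d1 < tau(A)] and [A] (hence [g(A)]) with pieces of diameter [d2] just above
   [tau(A)] then covers [(f + g)(A)] by pieces of diameter
   [ln ((e^d1 + K e^d2) / (1 + K)) < tau(A)].  Continuity of [g] comes from the
   normality of [C]: near a point of [int C], a Thompson factor close to 1
   forces a small norm difference. *)

Section WeightedMean.
Variable R : realFieldType.
Implicit Types K a b : R.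

Definition wmean K a b : R := (a + b * K) / (1 + K).

Lemma le_wmean K a b : 0 <= K -> a <= b -> a <= wmean K a b.
Proof. by move=> K0 ab; rewrite /wmean ler_pdivlMr; nra. Qed.

Lemma wmean_le K a b : 0 <= K -> a <= b -> wmean K a b <= b.
Proof. by move=> K0 ab; rewrite /wmean ler_pdivrMr; nra. Qed.

Lemma wmeanBl K a b : 0 <= K -> wmean K a b - a = (b - wmean K a b) * K.
Proof. by move=> K0; rewrite /wmean; field; rewrite lt0r_neq0 //; lra. Qed.

Lemma wmeanD K a b d : 0 <= K -> wmean K (a + d) (b + d) = wmean K a b + d.
Proof. by move=> K0; rewrite /wmean; field; rewrite lt0r_neq0 //; lra. Qed.

Lemma wmean_invB K a b : 0 <= K -> 0 < a -> a <= b ->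
  ((wmean K a b)^-1 - b^-1) * K <= a^-1 - (wmean K a b)^-1.
Proof.
move=> K0 a0 ab; rewrite -subr_ge0.
have b0 : 0 < b by lra.
have ab0 : 0 < a + b * K by nra.
have -> : a^-1 - (wmean K a b)^-1 - ((wmean K a b)^-1 - b^-1) * K
    = K * (a - b) ^+ 2 / (a * b * (a + b * K)).
  by rewrite /wmean; field; rewrite !lt0r_neq0 //; lra.
apply: divr_ge0; first by rewrite mulr_ge0 ?sqr_ge0.
by apply/ltW/mulr_gt0 => //; apply: mulr_gt0.
Qed.

End WeightedMean.

Lemma wmean_expR_lt (R : realType) (K d1 t : R) : 0 <= K -> d1 < t ->
  exists2 t', t < t' & forall d2, d2 < t' -> wmean K (expR d1) (expR d2) < expR t.
Proof.
move=> K0 d1t; have e1t : expR d1 < expR t by rewrite ltr_expR.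
have et0 := expR_gt0 t.
(* [e^d2 < e^t + D] gives [e^d2 K < e^t K + (e^t - e^d1)], i.e. the claim. *)
set D := (expR t - expR d1) / (1 + K).
have D0 : 0 < D by rewrite divr_gt0; lra.
have DK : D * (1 + K) = expR t - expR d1 by rewrite /D; field; rewrite lt0r_neq0 //; lra.
exists (ln (expR t + D)); first by rewrite -ltr_expR lnK ?posrE; lra.
move=> d2; rewrite -ltr_expR lnK ?posrE; last lra.
move=> e2; rewrite /wmean ltr_pdivrMr; last lra.
have : expR d2 * K <= (expR t + D) * K by apply: ler_wpM2r; lra.
nra.
Qed.

Section ClosedCone.
Variables (R : realType) (V : completeNormedModType R) (C : set V).
Hypothesis hC : is_closed_cone C.

Lemma closed_cone_scale (l : R) x : 0 <= l -> C x -> C (l *: x).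
Proof. by case: hC => _ _ scale _; apply: scale. Qed.

Lemma closed_cone_add x y : C x -> C y -> C (x + y).
Proof.
case: hC => _ convex _ _ Cx Cy.
have -> : x + y = 2 *: (2^-1 *: x + (1 - 2^-1) *: y).
  have -> : (1 - 2^-1 : R) = 2^-1 by field.
  by rewrite scalerDr !scalerA divff ?pnatr_eq0 // !scale1r.
by apply: closed_cone_scale => //; apply: convex => //; lra.
Qed.

End ClosedCone.

Section ThompsonMetric.
Variables (R : realType) (V : completeNormedModType R) (C : set V).
Hypothesis C_add : forall x y, C x -> C y -> C (x + y).
Hypothesis C_scale : forall (l : R) x, 0 <= l -> C x -> C (l *: x).

Lemma cle_trans x y z : cle C x y -> cle C y z -> cle C x z.
Proof. by rewrite /cle => hxy hyz; have := C_add hyz hxy; rewrite addrA addrNK. Qed.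

Lemma cleD x y x' y' : cle C x y -> cle C x' y' -> cle C (x + x') (y + y').
Proof. by rewrite /cle opprD addrACA; apply: C_add. Qed.

Lemma cle_dominated (K p q : R) u v : C u -> cle C v (K *: u) ->
  0 <= p -> p * K <= q -> cle C (p *: v) (q *: u).
Proof.
move=> Cu vKu p0 pKq; rewrite /cle.
have -> : q *: u - p *: v = (q - p * K) *: u + p *: (K *: u - v).
  by rewrite scalerBl scalerBr scalerA addrA addrNK.
by apply: C_add; apply: C_scale; rewrite ?subr_ge0.
Qed.

Definition tbound (b : R) (x y : V) : Prop :=
  1 <= b /\ cle C (b^-1 *: x) y /\ cle C y (b *: x).

Lemma tbound_ge b b' x y : C x -> tbound b x y -> b <= b' -> tbound b' x y.
Proof.
move=> Cx [b1 [lo up]] bb'; split; first lra.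
have b0 : 0 < b by lra.
split.
- apply: cle_trans lo; rewrite /cle -scalerBl.
  by apply: C_scale => //; rewrite subr_ge0 lef_pV2 ?posrE //; lra.
- apply: (cle_trans up); rewrite /cle -scalerBl.
  by apply: C_scale => //; rewrite subr_ge0.
Qed.

Lemma tbound_trans a b x y z : tbound a x y -> tbound b y z -> tbound (a * b) x z.
Proof.
move=> [a1 [lo1 up1]] [b1 [lo2 up2]]; split; first nra.
have a0 : a != 0 by apply: lt0r_neq0; lra.
split.
- apply: cle_trans lo2; rewrite invfM mulrC -scalerA /cle -scalerBr.
  by apply: C_scale => //; rewrite invr_ge0; lra.
- apply: (cle_trans up2); rewrite mulrC -scalerA /cle -scalerBr.
  by apply: C_scale => //; lra.
Qed.

Lemma tbound_sym b x y : tbound b x y -> tbound b y x.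
Proof.
move=> [b1 [lo up]]; have b0 : b != 0 by apply: lt0r_neq0; lra.
split => //; split; rewrite /cle.
- have -> : x - b^-1 *: y = b^-1 *: (b *: x - y).
    by rewrite scalerBr scalerA mulVf // scale1r.
  by apply: C_scale => //; rewrite invr_ge0; lra.
- have -> : b *: y - x = b *: (y - b^-1 *: x).
    by rewrite scalerBr scalerA divff // scale1r.
  by apply: C_scale => //; lra.
Qed.

Lemma interior_ball x : interior C x ->
  exists2 r : R, 0 < r & forall z, `|z| < r -> C (x + z).
Proof.
move=> /nbhs_ballP [r r0 hr]; exists r => // z hz; apply: hr.
by rewrite -ball_normE /ball_ /= opprD addrA subrr add0r normrN.
Qed.

Lemma interior_addr x y : interior C x -> C y -> interior C (x + y).
Proof.
move=> /interior_ball [r r0 hr] Cy; apply/nbhs_ballP; exists r => // w.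
rewrite -ball_normE /ball_ /= => hw.
have -> : w = x + (w - y - x) + y by rewrite [x + _]addrC !addrNK.
by apply: C_add => //; apply: hr; rewrite -normrN !opprB addrA.
Qed.

Lemma interior_subZ x w : interior C x ->
  exists2 e : R, 0 < e & forall t, 0 <= t -> t <= e -> C (x - t *: w).
Proof.
move=> /interior_ball [r r0 hr]; have w1 : 0 < `|w| + 1 by rewrite ltr_pwDr.
exists (r / (`|w| + 1)); first exact: divr_gt0.
move=> t t0 te; apply: hr; rewrite normrN normrZ ger0_norm //.
apply: (@le_lt_trans _ _ (r / (`|w| + 1) * `|w|)); first exact: ler_wpM2r.
by rewrite mulrAC ltr_pdivrMr // ltr_pM2l //; lra.
Qed.

Lemma tbound_interior x y : interior C x -> interior C y -> exists b, tbound b x y.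
Proof.
move=> ix iy.
have [e1 e10 he1] := interior_subZ x iy.
have [e2 e20 he2] := interior_subZ y ix.
pose b := 1 + e1^-1 + e2^-1.
have i1 : 0 < e1^-1 by rewrite invr_gt0.
have i2 : 0 < e2^-1 by rewrite invr_gt0.
have b0 : 0 < b by rewrite /b; lra.
have small e : 0 < e -> e^-1 < b -> b^-1 <= e.
  by move=> e0 eb; rewrite -[e]invrK lef_pV2 ?posrE ?invr_gt0 //; lra.
exists b; split; first by rewrite /b; lra.
split; rewrite /cle.
- apply: he1; first by rewrite invr_ge0 ltW.
  by apply: small => //; rewrite /b; lra.
- have -> : b *: x - y = b *: (x - b^-1 *: y).
    by rewrite scalerBr scalerA divff ?scale1r // lt0r_neq0.
  apply/C_scale/he2; [exact: ltW | by rewrite invr_ge0 ltW |].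
  by apply: small => //; rewrite /b; lra.
Qed.

Lemma dT_le x y d : (forall b, expR d < b -> tbound b x y) -> dT C x y <= d.
Proof.
move=> H; change (ln (inf [set b | tbound b x y]) <= d).
have e0 := expR_gt0 d.
have ne : [set b | tbound b x y] !=set0 by exists (expR d + 1); apply: H; lra.
have lb : has_lbound [set b | tbound b x y] by exists 1 => b [].
have inf1 : 1 <= inf [set b | tbound b x y] by apply: lb_le_inf => // b [].
have : inf [set b | tbound b x y] <= expR d.
  rewrite leNgt; apply/negP => lt.
  have := ge_inf lb (H ((expR d + inf [set b | tbound b x y]) / 2) _); lra.
by move=> le; rewrite -[d in _ <= d]expRK ler_ln ?posrE //; lra.
Qed.

Lemma tbound_dT_le b x y : C x -> tbound b x y -> dT C x y <= ln b.
Proof.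
move=> Cx hb; have b0 : 0 < b by case: hb => b1 _; lra.
by apply: dT_le => b'; rewrite lnK ?posrE // => bb'; apply: (tbound_ge Cx hb); lra.
Qed.

Lemma tbound_dT x y d b : interior C x -> interior C y ->
  dT C x y <= d -> expR d < b -> tbound b x y.
Proof.
move=> ix iy hd db; have [b0 hb0] := tbound_interior ix iy.
have inf1 : 1 <= inf [set b | tbound b x y] by apply: lb_le_inf; [exists b0 | move=> ? []].
have : inf [set b | tbound b x y] < b.
  by apply: le_lt_trans db; rewrite -[inf _]lnK ?posrE ?ler_expR //; lra.
move=> /(inf_lt (ex_intro _ b0 hb0)) [b1 hb1 lt].
by apply: tbound_ge hb1 _; [exact: interior_subset | lra].
Qed.

Lemma tbound_normB (k b : R) u v :
  (forall x y, cle C 0 x -> cle C x y -> `|x| <= k * `|y|) ->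
  tbound b u v -> `|u - v| <= (1 + `|k|) * (b - b^-1) * `|u|.
Proof.
move=> hk [b1 [lo up]].
have b0 : 0 < b by lra.
have ib1 : b^-1 <= 1 by rewrite invf_le1.
have ib0 : 0 < b^-1 by rewrite invr_gt0.
have bb : 0 <= b - b^-1 by lra.
have hx : `|v - b^-1 *: u| <= k * `|(b - b^-1) *: u|.
  apply: hk; rewrite /cle ?subr0 //.
  by rewrite scalerBl opprB addrA addrNK.
have -> : u - v = (1 - b^-1) *: u - (v - b^-1 *: u).
  by rewrite scalerBl scale1r opprB addrA addrNK.
apply: le_trans (ler_normB _ _) _.
have ib : 0 <= 1 - b^-1 by lra.
move: hx; rewrite !normrZ (ger0_norm bb) (ger0_norm ib) => hx.
have : k * ((b - b^-1) * `|u|) <= `|k| * ((b - b^-1) * `|u|).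
  by apply: ler_wpM2r; [exact: mulr_ge0 | exact: ler_norm].
have : (1 - b^-1) * `|u| <= (b - b^-1) * `|u| by apply: ler_wpM2r => //; lra.
rewrite -mulrA mulrDl mul1r; lra.
Qed.

Lemma tbound_ball x y r b : (forall z, `|z| < r -> C (x + z)) -> C x -> 1 < b ->
  `|x - y| < (1 - b^-1) * r -> tbound b x y.
Proof.
move=> hr Cx b1; have b0 : 0 < b by lra.
have [s s0 hb] : exists2 s, 0 < s & b^-1 = 1 - s.
  by exists (1 - b^-1); [rewrite subr_gt0 invf_lt1 | ring].
rewrite hb subKr => hxy.
have sN0 : s != 0 by rewrite lt0r_neq0.
have ball : `|s^-1 *: (y - x)| < r.
  rewrite normrZ ger0_norm ?invr_ge0 ?ltW // -normrN opprB.
  by rewrite mulrC ltr_pdivrMr // mulrC.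
have bs : 1 + s <= b.
  suff : 0 <= b - (1 + s) by lra.
  have -> : b - (1 + s) = (b - 1) ^+ 2 / b.
    by rewrite -[s](subKr 1) -hb; field; rewrite lt0r_neq0.
  by rewrite divr_ge0 ?sqr_ge0 ?ltW.
split; first lra.
split; rewrite /cle.
- have -> : y - b^-1 *: x = s *: (x + s^-1 *: (y - x)).
    by rewrite hb scalerDr scalerA divff // scale1r scalerBl scale1r opprB addrCA.
  by apply: C_scale; [exact: ltW | exact: hr].
- have up : C ((1 + s) *: x - y).
    have -> : (1 + s) *: x - y = s *: (x + - (s^-1 *: (y - x))).
      rewrite scalerDr scalerN scalerA divff // scale1r scalerDl scale1r.
      by rewrite opprB addrA (addrC x).
    by apply: C_scale; [exact: ltW | apply: hr; rewrite normrN].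
  apply: cle_trans up _; rewrite /cle -scalerBl.
  by apply: C_scale => //; lra.
Qed.

Lemma tbound_near x b : interior C x -> 1 < b ->
  \forall y \near x, interior C y /\ tbound b x y.
Proof.
move=> ix b1; have [r r0 hr] := interior_ball ix.
have s0 : 0 < 1 - b^-1 by rewrite subr_gt0 invf_lt1 //; lra.
have near_x : \forall y \near x, `|x - y| < (1 - b^-1) * r.
  by apply/nbhs_normP; exists ((1 - b^-1) * r); first exact: mulr_gt0.
apply: filterS2 (nbhs_interior ix) near_x => y iy xy; split => //.
exact: tbound_ball hr (interior_subset ix) b1 xy.
Qed.

Lemma nonexpansive_continuous g : normal_cone C -> dT_nonexpansive C g ->
  {within interior C, continuous g}.
Proof.
move=> [k hk] [gi gne]; apply: continuous_in_subspaceT => x; rewrite inE => ix.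
apply/cvgrPdist_lt => eps eps0.
set N := `|g x|; set k' := 1 + `|k|.
have N0 : 0 <= N by apply: normr_ge0.
have k'0 : 0 < k' by rewrite /k' ltr_pwDl.
(* [tbound_normB] bounds [`|g x - g y|] by [k' * 4 s * N] for factor [1 + 2 s]. *)
set s := eps / (4 * k' * (N + 1)).
have s0 : 0 < s by rewrite /s divr_gt0 // !mulr_gt0 //; lra.
have b1 : 1 < 1 + s by lra.
apply: filterS (tbound_near ix b1) => y [iy hxy].
have hd : dT C (g x) (g y) <= ln (1 + s).
  exact: le_trans (gne x y ix iy) (tbound_dT_le (interior_subset ix) hxy).
have hg : tbound (1 + 2 * s) (g x) (g y).
  by apply: (tbound_dT (gi x ix) (gi y iy) hd); rewrite lnK ?posrE; lra.
apply: le_lt_trans (tbound_normB hk hg) _; rewrite -/k' -/N.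
have inv_ge : 1 - 2 * s <= (1 + 2 * s)^-1.
  by rewrite -[X in _ <= X]mul1r ler_pdivlMr; nra.
have : k' * ((1 + 2 * s) - (1 + 2 * s)^-1) * N <= k' * (4 * s) * N.
  by apply: ler_wpM2r => //; apply: ler_wpM2l; lra.
have -> : k' * (4 * s) * N = eps * (N / (N + 1)).
  by rewrite /s; field; apply/andP; split; rewrite lt0r_neq0 //; lra.
have : eps * (N / (N + 1)) < eps.
  by rewrite gtr_pMr // ltr_pdivrMr; lra.
lra.
Qed.

Lemma tboundD K a b u u' v v' : C u -> 0 <= K -> cle C v (K *: u) -> a <= b ->
  tbound a u u' -> tbound b v v' -> tbound (wmean K a b) (u + v) (u' + v').
Proof.
move=> Cu K0 vKu ab [a1 [lo1 up1]] [b1 [lo2 up2]].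
have := wmean_invB K0 (lt_le_trans ltr01 a1) ab; have := wmeanBl a b K0.
have := wmean_le K0 ab; have := le_wmean K0 ab.
move: (wmean K a b) => c ac cb cBa cinv.
split; first lra.
split.
- apply: cle_trans (cleD lo1 lo2).
  have dom : cle C ((c^-1 - b^-1) *: v) ((a^-1 - c^-1) *: u).
    by apply: cle_dominated Cu vKu _ cinv; rewrite subr_ge0 lef_pV2 ?posrE //; lra.
  rewrite /cle; have -> : a^-1 *: u + b^-1 *: v - c^-1 *: (u + v)
      = (a^-1 - c^-1) *: u - (c^-1 - b^-1) *: v.
    by rewrite scalerDr !scalerBl opprD opprB addrACA.
  exact: dom.
- apply: cle_trans (cleD up1 up2) _.
  have dom : cle C ((b - c) *: v) ((c - a) *: u).
    by apply: cle_dominated Cu vKu _ _; rewrite ?subr_ge0 ?cBa.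
  rewrite /cle; have -> : c *: (u + v) - (a *: u + b *: v)
      = (c - a) *: u - (b - c) *: v.
    by rewrite scalerDr !scalerBl opprD opprB addrACA.
  exact: dom.
Qed.

Lemma dT_addD_le u u' v v' K d1 d2 :
  interior C u -> interior C u' -> interior C v -> interior C v' ->
  0 <= K -> cle C v (K *: u) -> d1 <= d2 ->
  dT C u u' <= d1 -> dT C v v' <= d2 ->
  dT C (u + v) (u' + v') <= ln (wmean K (expR d1) (expR d2)).
Proof.
move=> iu iu' iv iv' K0 vKu d12 hd1 hd2.
have e12 : expR d1 <= expR d2 by rewrite ler_expR.
have m0 : 0 < wmean K (expR d1) (expR d2).
  exact: lt_le_trans (expR_gt0 d1) (le_wmean K0 e12).
apply: dT_le => b; rewrite lnK ?posrE // => hb.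
have -> : b = wmean K (expR d1 + (b - wmean K (expR d1) (expR d2)))
                     (expR d2 + (b - wmean K (expR d1) (expR d2))).
  by rewrite wmeanD //; ring.
apply: tboundD (interior_subset iu) K0 vKu _ _ _; first lra.
- by apply: tbound_dT iu iu' hd1 _; lra.
- by apply: tbound_dT iv iv' hd2 _; lra.
Qed.

Lemma finite_cover_diamD A (f g : V -> V) K d1 d2 :
  (forall x, A x -> interior C (f x)) -> (forall x, A x -> interior C (g x)) ->
  (forall x y, A x -> A y -> dT C (g x) (g y) <= dT C x y) ->
  (forall x, A x -> tbound K (f x) (g x)) -> d1 <= d2 ->
  finite_cover_diam C (f @` A) d1 -> finite_cover_diam C A d2 ->
  finite_cover_diam C ((fun x => f x + g x) @` A) (ln (wmean K (expR d1) (expR d2))).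
Proof.
move=> fi gi gne hK d12 [s1 [cov1 hs1]] [s2 [cov2 hs2]].
pose piece := fun P Q : set V => (fun x => f x + g x) @` [set x | A x /\ P (f x) /\ Q x].
exists [seq piece P Q | P <- s1, Q <- s2]; split.
- move=> _ [x Ax <-].
  have [P hP Pfx] : exists2 P, P \in s1 & P (f x) by apply: cov1; exists x.
  have [Q hQ Qx] := cov2 x Ax.
  by exists (piece P Q); [apply/allpairsP; exists (P, Q) | exists x].
- move=> _ /allpairsP [[P Q] [/= hP hQ ->]]; split.
    by move=> _ [x [Ax _] <-]; apply: interior_addr (fi x Ax) (interior_subset (gi x Ax)).
  move=> _ _ [x [Ax [Pfx Qx]] <-] [y [Ay [Pfy Qy]] <-].
  have [K1 [_ gKf]] := hK x Ax.
  apply: dT_addD_le (fi x Ax) (fi y Ay) (gi x Ax) (gi y Ay) _ gKf d12 _ _; first lra.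
  + exact: (hs1 P hP).2.
  + exact: le_trans (gne x y Ax Ay) ((hs2 Q hQ).2 x y Qx Qy).
Qed.

Lemma tau_le A d : 0 < d -> finite_cover_diam C A d -> (tau C A <= d%:E)%E.
Proof. by move=> d0 h; apply: ereal_inf_lbound; exists d. Qed.

Lemma tau_lt A t : (tau C A < t%:E)%E ->
  exists d, [/\ 0 < d, finite_cover_diam C A d & d < t].
Proof. by move=> /ereal_inf_lt [_ [d [d0 hd] <-]]; rewrite lte_fin; exists d. Qed.

Lemma dT_bounded_tau_fin A : dT_bounded C A -> (0 < tau C A)%E ->
  exists2 t, 0 < t & tau C A = t%:E.
Proof.
move=> [hA [M hM]] tA.
have M0 : 0 < 1 + `|M| by rewrite ltr_pwDl.
have : (tau C A <= (1 + `|M|)%:E)%E.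
  apply: tau_le => //; exists [:: A]; split.
    by move=> x Ax; exists A; rewrite ?mem_seq1.
  move=> S; rewrite mem_seq1 => /eqP ->; split => // x y Ax Ay.
  by have := hM x y Ax Ay; have := ler_norm M; lra.
by move: tA; case: (tau C A) => // t; rewrite lte_fin; exists t.
Qed.

Lemma tau_gt0_nonempty A t : tau C A = t%:E -> 0 < t -> A !=set0.
Proof.
move=> Et t0; have [//|A0] := pselect (A !=set0).
have : (tau C A <= (t / 2)%:E)%E.
  apply: tau_le; first by rewrite divr_gt0.
  by exists [::]; split => [x Ax|S]; [case: A0; exists x | rewrite in_nil].
by rewrite Et lee_fin; lra.
Qed.

Lemma cover_tbound z (s : seq (set V)) d : interior C z ->
  (forall S, S \in s -> S `<=` interior C /\ forall x y, S x -> S y -> dT C x y <= d) ->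
  exists B, forall S, S \in s -> forall y, S y -> tbound B z y.
Proof.
move=> iz; elim: s => [|S s IH] hs; first by exists 1 => S; rewrite in_nil.
have [B hB] := IH (fun S' hS' => hs S' (@mem_behead _ (S :: s) S' hS')).
have [iS dS] := hs S (mem_head S s).
have [[p Sp]|nS] := pselect (S !=set0); last first.
  exists B => S'; rewrite in_cons => /orP[/eqP-> y Sy|]; last exact: hB.
  by case: nS; exists y.
have [b hb] := tbound_interior iz (iS p Sp).
exists (Num.max B (b * (expR d + 1))) => S'; rewrite in_cons => /orP[/eqP-> y Sy|hS' y Sy].
- have hpy : tbound (expR d + 1) p y.
    by apply: tbound_dT (iS p Sp) (iS y Sy) (dS p y Sp Sy) _; lra.
  apply: tbound_ge (interior_subset iz) (tbound_trans hb hpy) _.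
  by rewrite le_max lexx orbT.
- apply: tbound_ge (interior_subset iz) (hB S' hS' y Sy) _.
  by rewrite le_max lexx.
Qed.

Lemma tbound_uniform A (f g : V -> V) x0 d M :
  A x0 -> (forall x, A x -> interior C (f x)) -> (forall x, A x -> interior C (g x)) ->
  finite_cover_diam C (f @` A) d ->
  (forall x y, A x -> A y -> dT C (g x) (g y) <= M) ->
  exists K, forall x, A x -> tbound K (f x) (g x).
Proof.
move=> Ax0 fi gi [s [cov hs]] gM.
have [B hB] := cover_tbound (fi x0 Ax0) hs.
have [b hb] := tbound_interior (fi x0 Ax0) (gi x0 Ax0).
exists (B * (b * (expR M + 1))) => x Ax.
have [S hS Sfx] : exists2 S, S \in s & S (f x) by apply: cov; exists x.
have hgx : tbound (expR M + 1) (g x0) (g x).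
  by apply: tbound_dT (gi _ Ax0) (gi _ Ax) (gM _ _ Ax0 Ax) _; lra.
exact: tbound_trans (tbound_sym (hB S hS _ Sfx)) (tbound_trans hb hgx).
Qed.

Lemma tau_lt_addD A (f g : V -> V) :
  (forall x, interior C x -> interior C (f x)) -> dT_nonexpansive C g ->
  dT_bounded C A -> (0 < tau C A)%E -> (tau C (f @` A) < tau C A)%E ->
  (tau C ((fun x => (f x + g x)%R) @` A) < tau C A)%E.
Proof.
move=> fi [gi gne] hAb tA tfA; have [hA [M hM]] := hAb.
have [t t0 Et] := dT_bounded_tau_fin hAb tA.
have [x0 Ax0] := tau_gt0_nonempty Et t0.
rewrite Et in tfA *.
have fiA x : A x -> interior C (f x) by move=> Ax; apply/fi/hA.
have giA x : A x -> interior C (g x) by move=> Ax; apply/gi/hA.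
have gneA x y : A x -> A y -> dT C (g x) (g y) <= dT C x y.
  by move=> Ax Ay; apply: gne; apply: hA.
have [d1 [d10 cov1 d1t]] := tau_lt tfA.
have [K hK] := tbound_uniform Ax0 fiA giA cov1
  (fun x y Ax Ay => le_trans (gneA x y Ax Ay) (hM x y Ax Ay)).
have K0 : 0 <= K by case: (hK x0 Ax0) => K1 _; lra.
have [t' tt' mean_lt] := wmean_expR_lt K0 d1t.
have [d2 [d20 cov2 d2t']] : exists d, [/\ 0 < d, finite_cover_diam C A d & d < t'].
  by apply: tau_lt; rewrite Et lte_fin.
have td2 : t <= d2 by rewrite -lee_fin -Et tau_le.
have e1 : 1 < expR d1 by rewrite -expR0 ltr_expR.
have m1 : 1 < wmean K (expR d1) (expR d2).
  by apply: lt_le_trans e1 (le_wmean K0 _); rewrite ler_expR; lra.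
have cov12 := finite_cover_diamD fiA giA gneA hK (ltW (lt_le_trans d1t td2)) cov1 cov2.
apply: le_lt_trans (tau_le (ln_gt0 m1) cov12) _.
by rewrite lte_fin -ltr_expR lnK ?posrE ?mean_lt //; lra.
Qed.

End ThompsonMetric.

Theorem theorem2p5 (R : realType) (V : completeNormedModType R) (C : set V)
  (f g : V -> V) :
  is_closed_cone C -> normal_cone C -> (exists x, interior C x) ->
  tau_condensing C (interior C) f ->
  dT_nonexpansive C g ->
  tau_condensing C (interior C) (fun x => f x + g x).
Proof.
move=> hC hN _ [fi fc fcond] hg.
have C_add := @closed_cone_add _ _ _ hC; have C_scale := @closed_cone_scale _ _ _ hC.
split.
- move=> x ix; exact (interior_addr C_add (fi x ix) (interior_subset (proj1 hg x ix))).
- exact: within_continuousD fc (nonexpansive_continuous C_add C_scale hN hg).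
- by move=> A hA hAb tA; apply: tau_lt_addD => //; apply: fcond.
Qed.
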